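(* There exists a countable graph $G$ such that every tree-decomposition $(T,(V_t)_{t\in T})$ of $G$ into finite parts has a node $t$ and sets $Z_1,Z_2\subseteq V_t$ with $|Z_1|=|Z_2|=\ell\in\mathbb N$ such that $G$ does not contain $\ell$ pairwise disjoint $Z_1$–$Z_2$ paths.
   Context: A tree-decomposition $(T,(V_t)_{t\in T})$ of $G$ consists of a tree $T$ and bags $V_t\subseteq V(G)$ covering all vertices and edges of $G$ such that for every vertex $v$ the nodes $t$ with $v\in V_t$ form a subtree; it is into finite parts if all bags are finite. (The conclusion says that the leanness condition fails for the pair of nodes $s=t$.) *)

From Stdlib Require Import List Arith.
Import ListNotations.

Fixpoint chain {X : Type} (E : X -> X -> Prop) (l : list X) : Prop :=
  match l with
  | x :: ((y :: _) as r) => E x y /\ chain E r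
  | _ => True
  end.

Definition simple_graph {X : Type} (E : X -> X -> Prop) : Prop :=
  (forall x y, E x y -> E y x) /\ (forall x, ~ E x x).

Definition countable (X : Type) : Prop :=
  exists f : X -> nat, forall x y, f x = f y -> x = y.

Definition is_path {X : Type} (E : X -> X -> Prop) (p : list X) : Prop :=
  p <> [] /\ NoDup p /\ chain E p.

Definition ends {X : Type} (p : list X) (a b : X) : Prop :=
  hd_error p = Some a /\ hd_error (rev p) = Some b.

Definition connected {X : Type} (E : X -> X -> Prop) : Prop :=
  forall s t : X, exists p, is_path E p /\ ends p s t.

Definition acyclic {X : Type} (E : X -> X -> Prop) : Prop :=
  ~ exists c x y, is_path E c /\ 3 <= length c /\ ends c x y /\ E y x.

Definition is_tree {X : Type} (E : X -> X -> Prop) : Prop :=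
  simple_graph E /\ connected E /\ acyclic E.

Definition tree_decomposition {V T : Type} (adj : V -> V -> Prop)
    (tE : T -> T -> Prop) (B : T -> V -> Prop) : Prop :=
  is_tree tE /\
  (forall v, exists t, B t v) /\
  (forall u v, adj u v -> exists t, B t u /\ B t v) /\
  (forall v t1 t2, B t1 v -> B t2 v ->
     exists p, is_path tE p /\ ends p t1 t2 /\ Forall (fun t => B t v) p).

Definition finite_parts {V T : Type} (B : T -> V -> Prop) : Prop :=
  forall t, exists l : list V, forall v, B t v -> In v l.

Definition AB_path {V : Type} (adj : V -> V -> Prop) (A Bs : list V)
    (p : list V) : Prop :=
  exists a b, is_path adj p /\ ends p a b /\
    (forall x, In x p -> In x A -> x = a) /\ In a A /\
    (forall x, In x p -> In x Bs -> x = b) /\ In b Bs.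

Definition has_disjoint_AB_paths {V : Type} (adj : V -> V -> Prop)
    (A Bs : list V) (n : nat) : Prop :=
  exists Ps : list (list V), length Ps = n /\
    Forall (AB_path adj A Bs) Ps /\
    (forall i j x, i < j < length Ps -> In x (nth i Ps []) -> ~ In x (nth j Ps [])).

(* G is an infinite clique k_0, k_1, ... together with a ray r_0 r_1 ..., where r_i is
   joined to k_(i+1); so k_0 has no neighbour on the ray.

   Fix a tree-decomposition into finite parts. Every bag B_t misses some clique vertex,
   and any two clique vertices share a bag, so all bags of the clique vertices missing
   from B_t lie beyond one neighbour t' of t. Following these neighbours gives a walk
   t_0 t_1 ... in T along which the clique vertices of a bag, k_0 among them, persist.
   If some y leaves the bag at a step t_n t_(n+1), then every y-k_0 path meets
   X = (B_(t_n) ∩ B_(t_(n+1))) \ {k_0}, so {y} ∪ X and {k_0} ∪ X are not linked.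
   Otherwise the bags increase; as the walk cannot approach a fixed node forever,
   every clique vertex and ray vertices of unbounded index enter them. A bag holding
   r_i, r_j (i < j) and k_0, ..., k_(j+2) is not lean: r_i, r_j, k_1, ..., k_(j+1)
   and k_0, ..., k_(j+2) are separated by the j + 2 vertices k_1, ..., k_(j+1), r_(j+1). *)

From Stdlib Require Import List Arith Lia Classical ClassicalEpsilon FinFun.
Import ListNotations.

Section Walks.

Context {X : Type} (E : X -> X -> Prop).

Definition walk (w : list X) (a b : X) : Prop := chain E w /\ ends w a b.

Lemma hd_error_In (l : list X) x : hd_error l = Some x -> In x l.
Proof. destruct l; simpl; [discriminate|]. intros [= ->]; left; reflexivity. Qed.

Lemma ends_In (p : list X) a b : ends p a b -> In a p /\ In b p.
Proof.
  intros [Ha Hb]; split; [exact (hd_error_In _ _ Ha)|].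
  apply in_rev, hd_error_In, Hb.
Qed.

Lemma ends_hd (x : X) q a b : ends (x :: q) a b -> x = a.
Proof. intros [[= ->] _]; reflexivity. Qed.

Lemma ends_rev (p : list X) a b : ends p a b -> ends (rev p) b a.
Proof. intros [Ha Hb]; split; [exact Hb|now rewrite rev_involutive]. Qed.

Lemma ends_suffix (l1 : list X) x l2 a b : ends (l1 ++ x :: l2) a b -> ends (x :: l2) x b.
Proof.
  intros [_ Hb]; split; [reflexivity|].
  rewrite rev_app_distr in Hb; simpl in *; rewrite <- app_assoc in Hb.
  destruct (rev l2); simpl in *; congruence.
Qed.

Lemma ends_snoc (p : list X) a b : ends p a b -> exists r, p = r ++ [b].
Proof.
  intros [_ Hb]; exists (rev (tl (rev p))).
  rewrite <- (rev_involutive p) at 1.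
  destruct (rev p) as [|y r]; simpl in *; congruence.
Qed.

Lemma ends_app (p q : list X) a m b : ends p a m -> ends (m :: q) m b -> ends (p ++ q) a b.
Proof.
  destruct p as [|x p]; [intros [[=] _]|].
  intros [Ha Hm] [_ Hb]; split; [exact Ha|].
  rewrite rev_app_distr; simpl in Hb.
  destruct (rev q); simpl in *; congruence.
Qed.

Lemma chain_cons_inv a l : chain E (a :: l) -> chain E l.
Proof. destruct l; simpl; tauto. Qed.

Lemma chain_app_inv_r l1 l2 : chain E (l1 ++ l2) -> chain E l2.
Proof.
  induction l1 as [|a l1 IH]; simpl; [auto|].
  intros H; apply IH, (chain_cons_inv a), H.
Qed.

Lemma chain_join l1 x l2 :
  chain E (l1 ++ [x]) -> chain E (x :: l2) -> chain E (l1 ++ x :: l2).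
Proof.
  induction l1 as [|a [|b l1] IH]; simpl; [auto|tauto|].
  intros [Hab H1] H2; split; [exact Hab|]. apply IH; assumption.
Qed.

Lemma chain_rev l : (forall x y, E x y -> E y x) -> chain E l -> chain E (rev l).
Proof.
  intros Hsym; induction l as [|a [|b l] IH]; simpl; [tauto|tauto|].
  intros [Hab Hc]; rewrite <- app_assoc; simpl.
  apply chain_join; [exact (IH Hc)|simpl; auto].
Qed.

Lemma walk_app p q a m b : walk p a m -> walk (m :: q) m b -> walk (p ++ q) a b.
Proof.
  intros [Hp Hpe] [Hq Hqe]; split; [|exact (ends_app _ _ _ _ _ Hpe Hqe)].
  destruct (ends_snoc _ _ _ Hpe) as [r ->].
  rewrite <- app_assoc; exact (chain_join _ _ _ Hp Hq).
Qed.

Lemma walk_rev p a b : (forall x y, E x y -> E y x) -> walk p a b -> walk (rev p) b a.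
Proof. intros Hsym [Hc He]; split; [exact (chain_rev _ Hsym Hc)|exact (ends_rev _ _ _ He)]. Qed.

Lemma walk_suffix l1 x l2 a b : walk (l1 ++ x :: l2) a b -> walk (x :: l2) x b.
Proof.
  intros [Hc He]; split; [exact (chain_app_inv_r _ _ Hc)|exact (ends_suffix _ _ _ _ _ He)].
Qed.

Lemma walk_of_path p a b : is_path E p -> ends p a b -> walk p a b.
Proof. intros (_ & _ & Hc) He; split; assumption. Qed.

Lemma path_suffix l1 x l2 : is_path E (l1 ++ x :: l2) -> is_path E (x :: l2).
Proof.
  intros (_ & Hn & Hc); split; [discriminate|split].
  - exact (NoDup_app_remove_l _ _ Hn).
  - exact (chain_app_inv_r _ _ Hc).
Qed.

Lemma path_cons a c p b :
  E a c -> ~ In a (c :: p) -> is_path E (c :: p) -> ends (c :: p) c b ->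
  is_path E (a :: c :: p) /\ ends (a :: c :: p) a b.
Proof.
  intros Hac Ha (_ & Hn & Hc) He; split; [split; [discriminate|split]|].
  - constructor; assumption.
  - split; assumption.
  - exact (ends_app [a; c] p a c b (conj eq_refl eq_refl) He).
Qed.

Lemma path_of_walk w a b : walk w a b -> exists p, is_path E p /\ ends p a b /\ incl p w.
Proof.
  revert a; induction w as [|x [|c w] IH]; intros a [Hc He].
  - destruct He as [[=] _].
  - destruct He as [[= Hx] [= Hb]]; subst x b.
    exists [a]; repeat split; [discriminate|constructor; [intros []|constructor]|apply incl_refl].
  - pose proof (ends_hd _ _ _ _ He); subst x; destruct Hc as [Hac Hc].
    destruct (IH c) as (p & Hp & Hpe & Hpw).
    { split; [exact Hc|exact (ends_suffix [a] _ _ _ _ He)]. }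
    destruct (classic (In a p)) as [Hin|Hin].
    + destruct (in_split _ _ Hin) as (l1 & l2 & ->).
      exists (a :: l2); split; [exact (path_suffix _ _ _ Hp)|split].
      * exact (ends_suffix _ _ _ _ _ Hpe).
      * intros y Hy; right; apply Hpw, in_or_app; right; exact Hy.
    + destruct p as [|c' p]; [destruct Hpe as [[=] _]|].
      pose proof (ends_hd _ _ _ _ Hpe); subst c'.
      destruct (path_cons a c p b) as [Hp' Hpe']; try assumption.
      exists (a :: c :: p); split; [exact Hp'|split; [exact Hpe'|]].
      apply incl_cons; [left; reflexivity|intros y Hy; right; exact (Hpw y Hy)].
Qed.

Lemma walk_crossing (C : X -> Prop) w a b :
  walk w a b -> C a -> ~ C b -> exists u v, E u v /\ In v w /\ C u /\ ~ C v.
Proof.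
  revert a; induction w as [|x [|c w] IH]; intros a [Hc He] Ha Hb.
  - destruct He as [[=] _].
  - destruct He as [[= Hx] [= Hb']]; subst x b; contradiction.
  - pose proof (ends_hd _ _ _ _ He); subst x; destruct Hc as [Hac Hc].
    destruct (classic (C c)) as [Hcc|Hcc].
    + destruct (IH c) as (u & v & Huv & Hv & Hu & Hnv); try assumption.
      * split; [exact Hc|exact (ends_suffix [a] _ _ _ _ He)].
      * exists u, v; split; [exact Huv|split; [right; exact Hv|split; assumption]].
    + exists a, c; split; [exact Hac|split; [right; left; reflexivity|split; assumption]].
Qed.

End Walks.

Section TreeSides.

Context {T : Type} (tE : T -> T -> Prop) (Htree : is_tree tE).

Let tE_sym : forall x y, tE x y -> tE y x := proj1 (proj1 Htree).
Let tE_irrefl : forall x, ~ tE x x := proj2 (proj1 Htree).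

Definition side (t t' s : T) : Prop := exists w, walk tE w t' s /\ ~ In t w.

Lemma tree_edge_path x c q y :
  tE x y -> is_path tE (x :: c :: q) -> ends (x :: c :: q) x y -> c = y.
Proof.
  intros Hxy Hp He; apply NNPP; intros Hcy.
  destruct q as [|z q]; [destruct He as [_ [= Hc]]; contradiction|].
  apply (proj2 (proj2 Htree)); exists (x :: c :: z :: q), x, y.
  split; [exact Hp|split; [simpl; lia|split; [exact He|exact (tE_sym _ _ Hxy)]]].
Qed.

Lemma side_self t t' : tE t t' -> side t t' t'.
Proof.
  intros Htt'; exists [t']; split; [split; [exact I|split; reflexivity]|].
  intros [Ht|[]]; subst; exact (tE_irrefl _ Htt').
Qed.

Lemma side_extend t t' s x w : side t t' s -> walk tE w s x -> ~ In t w -> side t t' x.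
Proof.
  intros (p & Hp & Hpt) Hw Hwt.
  destruct w as [|y w]; [destruct Hw as [_ [[=] _]]|].
  pose proof (ends_hd _ _ _ _ (proj2 Hw)); subst y.
  exists (p ++ w); split; [exact (walk_app _ _ _ _ _ _ Hp Hw)|].
  intros Ht; apply in_app_or in Ht as [Ht|Ht]; [exact (Hpt Ht)|exact (Hwt (or_intror Ht))].
Qed.

Lemma side_of_path t l1 t' l2 s :
  is_path tE (t :: l1 ++ t' :: l2) -> ends (t :: l1 ++ t' :: l2) t s -> side t t' s.
Proof.
  intros Hp He; exists (t' :: l2); split.
  - exact (walk_suffix _ (t :: l1) _ _ _ _ (walk_of_path _ _ _ _ Hp He)).
  - destruct Hp as (_ & Hn & _); apply NoDup_cons_iff in Hn as [Hn _].
    intros Ht; apply Hn, in_or_app; right; exact Ht.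
Qed.

Lemma side_cover t t' s : tE t t' -> side t t' s \/ side t' t s.
Proof.
  intros Htt'; destruct (proj1 (proj2 Htree) t s) as (p & Hp & He).
  destruct (classic (In t' p)) as [Hin|Hin].
  - left; destruct (in_split _ _ Hin) as (l1 & l2 & ->).
    destruct l1 as [|x l1]; pose proof (ends_hd _ _ _ _ He) as Hx.
    + rewrite Hx in Htt'; exfalso; exact (tE_irrefl _ Htt').
    + subst x; exact (side_of_path _ _ _ _ _ Hp He).
  - right; exists p; split; [exact (walk_of_path _ _ _ _ Hp He)|exact Hin].
Qed.

(* Two walks to [s] from either end of the edge, each avoiding the other end,
   would close a cycle through the edge. *)
Lemma side_disj t t' s : tE t t' -> side t t' s -> side t' t s -> False.
Proof.
  intros Htt' (w1 & Hw1 & Hw1t) (w2 & Hw2 & Hw2t').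
  destruct (path_of_walk _ _ _ _ Hw2) as (p2 & Hp2 & Hp2e & Hp2w).
  destruct p2 as [|x [|c q]]; [destruct Hp2e as [[=] _]| |].
  - destruct Hp2e as [[= Hx] [= Hs]]; subst x s.
    exact (Hw1t (proj2 (ends_In _ _ _ (proj2 Hw1)))).
  - pose proof (ends_hd _ _ _ _ Hp2e); subst x.
    assert (Hcq : walk tE (c :: q) c s)
      by exact (walk_suffix _ [t] _ _ _ _ (walk_of_path _ _ _ _ Hp2 Hp2e)).
    assert (Htcq : ~ In t (c :: q)) by (destruct Hp2 as (_ & Hn & _); inversion Hn; assumption).
    pose proof (walk_rev _ _ _ _ tE_sym Hw1) as Hr.
    destruct (rev w1) as [|y r] eqn:Hw1r; [destruct Hr as [_ [[=] _]]|].
    pose proof (ends_hd _ _ _ _ (proj2 Hr)); subst y.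
    destruct (path_of_walk _ _ _ _ (walk_app _ _ _ _ _ _ Hcq Hr)) as (p & Hp & Hpe & Hpw).
    destruct p as [|c' p]; [destruct Hpe as [[=] _]|].
    pose proof (ends_hd _ _ _ _ Hpe); subst c'.
    assert (Htp : ~ In t (c :: p)).
    { intros Ht; apply Hpw, in_app_or in Ht as [Ht|Ht]; [exact (Htcq Ht)|].
      apply Hw1t, in_rev; rewrite Hw1r; right; exact Ht. }
    destruct (path_cons _ t c p t' (proj1 (proj2 (proj2 Hp2))) Htp Hp Hpe) as [Hp' Hpe'].
    apply Hw2t', Hp2w; rewrite <- (tree_edge_path _ _ _ _ Htt' Hp' Hpe'); right; left; reflexivity.
Qed.

Lemma walk_between_sides_In t t' s s' w :
  tE t t' -> side t t' s' -> side t' t s -> walk tE w s' s -> In t w.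
Proof.
  intros Htt' Hs' Hs Hw; apply NNPP; intros Hwt.
  exact (side_disj t t' s Htt' (side_extend _ _ _ _ _ Hs' Hw Hwt) Hs).
Qed.

(* Moving along [f] always towards [s] would decrease the distance to [s] forever. *)
Lemma not_always_towards (f : nat -> T) s :
  (forall n, tE (f n) (f (S n))) -> ~ (forall n, side (f n) (f (S n)) s).
Proof.
  intros Hf Htowards.
  assert (Hfar : forall d n p, is_path tE p -> ends p (f n) s -> length p <= d -> False).
  { induction d as [|d IH]; intros n p Hp Hpe Hlen.
    - destruct p; [destruct Hpe as [[=] _]|simpl in Hlen; lia].
    - destruct (classic (In (f (S n)) p)) as [Hin|Hin].
      + destruct (in_split _ _ Hin) as (l1 & l2 & ->).
        apply (IH (S n) (f (S n) :: l2));
          [exact (path_suffix _ _ _ _ Hp)|exact (ends_suffix _ _ _ _ _ Hpe)|].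
        destruct l1 as [|x l1]; pose proof (ends_hd _ _ _ _ Hpe) as Hx.
        * exfalso; pose proof (Hf n) as Hn; rewrite Hx in Hn; exact (tE_irrefl _ Hn).
        * rewrite length_app in Hlen; simpl in *; lia.
      + apply (side_disj _ _ _ (Hf n) (Htowards n)).
        exists p; split; [exact (walk_of_path _ _ _ _ Hp Hpe)|exact Hin]. }
  destruct (proj1 (proj2 Htree) (f 0) s) as (p & Hp & Hpe).
  exact (Hfar (length p) 0 p Hp Hpe (le_n _)).
Qed.

End TreeSides.

Section Decompositions.

Context {V T : Type} (adj : V -> V -> Prop) (tE : T -> T -> Prop) (B : T -> V -> Prop).
Hypothesis HTD : tree_decomposition adj tE B.

Let Htree : is_tree tE := proj1 HTD.
Let tE_sym : forall x y, tE x y -> tE y x := proj1 (proj1 Htree).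
Let edge_cover : forall u w, adj u w -> exists t, B t u /\ B t w := proj1 (proj2 (proj2 HTD)).

Definition confined (t t' : T) (v : V) : Prop := forall s, B s v -> side tE t t' s.

Lemma bag_crossing t t' s s' v :
  tE t t' -> B s v -> side tE t' t s -> B s' v -> side tE t t' s' -> B t v /\ B t' v.
Proof.
  intros Htt' Hs Hss Hs' Hss'; pose proof (proj2 (proj2 (proj2 HTD))) as Hsub.
  destruct (Hsub v s' s Hs' Hs) as (p & Hp & Hpe & Hpv).
  destruct (Hsub v s s' Hs Hs') as (q & Hq & Hqe & Hqv).
  rewrite Forall_forall in Hpv, Hqv; split.
  - apply Hpv, (walk_between_sides_In tE Htree t t' s s');
      [exact Htt'|exact Hss'|exact Hss|exact (walk_of_path _ _ _ _ Hp Hpe)].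
  - apply Hqv, (walk_between_sides_In tE Htree t' t s' s);
      [exact (tE_sym _ _ Htt')|exact Hss|exact Hss'|exact (walk_of_path _ _ _ _ Hq Hqe)].
Qed.

Lemma confined_of_bag t t' s v :
  tE t t' -> B s v -> side tE t t' s -> ~ B t v -> confined t t' v.
Proof.
  intros Htt' Hs Hss Htv s' Hs'.
  destruct (side_cover tE Htree t t' s' Htt') as [H|H]; [exact H|].
  exfalso; exact (Htv (proj1 (bag_crossing t t' s' s v Htt' Hs' H Hs Hss))).
Qed.

Lemma confined_of_leaving t t' v : tE t t' -> B t v -> ~ B t' v -> confined t' t v.
Proof.
  intros Htt' Htv Ht'v.
  pose proof (tE_sym _ _ Htt') as Ht't.
  exact (confined_of_bag t' t t v Ht't Htv (side_self tE Htree t' t Ht't) Ht'v).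
Qed.

Lemma confined_adj t t' u w : tE t t' -> adj u w -> confined t t' u -> confined t' t w -> False.
Proof.
  intros Htt' Huw Hu Hw; destruct (edge_cover u w Huw) as (s & Hsu & Hsw).
  exact (side_disj tE Htree t t' s Htt' (Hu s Hsu) (Hw s Hsw)).
Qed.

Lemma confined_separation t t' u w :
  tE t t' -> adj u w -> confined t' t u -> ~ confined t' t w -> B t w /\ B t' w.
Proof.
  intros Htt' Huw Hu Hw; destruct (edge_cover u w Huw) as (s & Hsu & Hsw).
  apply NNPP; intros Hn; apply Hw; intros s' Hs'.
  destruct (side_cover tE Htree t t' s' Htt') as [H|H]; [|exact H].
  exfalso; exact (Hn (bag_crossing t t' s s' w Htt' Hsw (Hu s Hsu) Hs' H)).
Qed.

End Decompositions.

Section Separators.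

Context {V : Type} (adj : V -> V -> Prop).

Definition separates (X Z1 Z2 : list V) : Prop :=
  forall p a b, is_path adj p -> ends p a b -> In a Z1 -> In b Z2 -> exists x, In x X /\ In x p.

Lemma disjoint_hitting_length (X : list V) (Ps : list (list V)) :
  Forall (fun p => exists x, In x X /\ In x p) Ps ->
  (forall i j x, i < j < length Ps -> In x (nth i Ps []) -> ~ In x (nth j Ps [])) ->
  length Ps <= length X.
Proof.
  revert X; induction Ps as [|p Ps IH]; intros X Hhit Hdisj; simpl; [lia|].
  inversion Hhit as [|? ? (x & HxX & Hxp) Hhit']; subst.
  set (dec := fun y z : V => excluded_middle_informative (y = z)).
  pose proof (remove_length_lt dec X x HxX).
  enough (length Ps <= length (remove dec x X)) by lia.
  apply IH.
  - rewrite Forall_forall in *; intros q Hq; destruct (Hhit' q Hq) as (y & HyX & Hyq).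
    exists y; split; [|exact Hyq].
    apply in_in_remove; [|exact HyX]; intros ->.
    destruct (In_nth _ _ [] Hq) as (n & Hn & Hnth).
    apply (Hdisj 0 (S n) x); simpl; [lia|exact Hxp|rewrite Hnth; exact Hyq].
  - intros i j y Hij; apply (Hdisj (S i) (S j) y); simpl; lia.
Qed.

Lemma separator_blocks_disjoint_paths (X Z1 Z2 : list V) l :
  separates X Z1 Z2 -> length X < l -> ~ has_disjoint_AB_paths adj Z1 Z2 l.
Proof.
  intros Hsep Hl (Ps & <- & HPs & Hdisj).
  enough (length Ps <= length X) by lia.
  apply disjoint_hitting_length; [|exact Hdisj].
  rewrite Forall_forall in *; intros p Hp.
  destruct (HPs p Hp) as (a & b & Hpath & Hpe & _ & Ha & _ & Hb).
  exact (Hsep p a b Hpath Hpe Ha Hb).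
Qed.

Definition not_lean_at {T : Type} (B : T -> V -> Prop) (t : T) : Prop :=
  exists (l : nat) (Z1 Z2 : list V),
    NoDup Z1 /\ NoDup Z2 /\ length Z1 = l /\ length Z2 = l /\
    (forall v, In v Z1 -> B t v) /\ (forall v, In v Z2 -> B t v) /\
    ~ has_disjoint_AB_paths adj Z1 Z2 l.

Lemma not_lean_of_separator {T : Type} (B : T -> V -> Prop) t (Z1 Z2 X : list V) :
  NoDup Z1 -> NoDup Z2 -> length Z2 = length Z1 ->
  (forall v, In v Z1 -> B t v) -> (forall v, In v Z2 -> B t v) ->
  length X < length Z1 -> separates X Z1 Z2 -> not_lean_at B t.
Proof.
  intros HZ1 HZ2 Hlen HB1 HB2 HX Hsep; exists (length Z1), Z1, Z2.
  repeat split; try assumption.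
  exact (separator_blocks_disjoint_paths X Z1 Z2 _ Hsep HX).
Qed.

End Separators.

Lemma finite_subset_enum {A : Type} (L : list A) (P : A -> Prop) :
  exists X, NoDup X /\ forall x, In x X <-> In x L /\ P x.
Proof.
  set (dec := fun y z : A => excluded_middle_informative (y = z)).
  exists (filter (fun x => if excluded_middle_informative (P x) then true else false)
            (nodup dec L)).
  split; [apply NoDup_filter, NoDup_nodup|].
  intros x; rewrite filter_In, nodup_In.
  destruct (excluded_middle_informative (P x)); intuition discriminate.
Qed.

Lemma nat_crossing (P : nat -> Prop) m n :
  m <= n -> P m -> ~ P n -> exists i, m <= i /\ P i /\ ~ P (S i).
Proof.
  induction n as [|n IH]; intros Hmn Hm Hn.
  - assert (m = 0) as -> by lia; contradiction.
  - destruct (Nat.eq_dec m (S n)) as [->|Hne]; [contradiction|].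
    destruct (classic (P n)) as [Hp|Hp].
    + exists n; split; [lia|split; assumption].
    + apply IH; [lia|assumption|assumption].
Qed.

Inductive vertex : Type := K (k : nat) | R (i : nat).

Definition gadj (u w : vertex) : Prop :=
  match u, w with
  | K i, K j => i <> j
  | R i, R j => j = S i \/ i = S j
  | R i, K j | K j, R i => j = S i
  end.

Lemma gadj_simple : simple_graph gadj.
Proof. split; [intros [i|i] [j|j]; simpl; intuition|intros [i|i]; simpl; lia]. Qed.

Lemma vertex_countable : countable vertex.
Proof.
  exists (fun v => match v with K i => i + i | R i => S (i + i) end).
  intros [i|i] [j|j] H; f_equal; lia.
Qed.

Definition vertex_index (v : vertex) : nat := match v with K i | R i => i end.

Lemma fresh_clique_vertex (L : list vertex) m : exists k, m <= k /\ ~ In (K k) L.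
Proof.
  exists (m + S (list_max (map vertex_index L))); split; [lia|intros Hin].
  assert (Hle : Forall (fun k => k <= list_max (map vertex_index L)) (map vertex_index L))
    by (apply list_max_le; reflexivity).
  rewrite Forall_forall in Hle; specialize (Hle _ (in_map vertex_index _ _ Hin)); simpl in Hle; lia.
Qed.

Lemma low_ray_separated j p x k :
  is_path gadj p -> ends p (R x) (K k) -> x <= j ->
  exists w, In w (map K (seq 1 (S j)) ++ [R (S j)]) /\ In w p.
Proof.
  intros Hp Hpe Hx.
  destruct (walk_crossing gadj (fun v => exists y, v = R y /\ y <= j) p (R x) (K k))
    as (u & w & Huw & Hw & (y & -> & Hy) & Hnw).
  - exact (walk_of_path _ _ _ _ Hp Hpe).
  - exists x; split; [reflexivity|exact Hx].
  - intros (y & [=] & _).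
  - exists w; split; [apply in_or_app|exact Hw].
    destruct w as [z|z]; simpl in Huw.
    + left; apply in_map, in_seq; lia.
    + right; left; destruct Huw as [->| ->].
      * destruct (le_gt_dec (S y) j); [exfalso; apply Hnw; exists (S y); split; [reflexivity|lia]|].
        f_equal; lia.
      * exfalso; apply Hnw; exists z; split; [reflexivity|lia].
Qed.

Lemma not_lean_of_two_ray_vertices {T : Type} (B : T -> vertex -> Prop) t i j :
  i < j -> (forall v, In v (R i :: R j :: map K (seq 0 (j + 3))) -> B t v) ->
  not_lean_at gadj B t.
Proof.
  intros Hij Hbag.
  assert (HK : forall a n, NoDup (map K (seq a n)))
    by (intros a n; apply Injective_map_NoDup; [intros ? ? [=]; assumption|apply seq_NoDup]).
  apply (not_lean_of_separator gadj B t (R i :: R j :: map K (seq 1 (S j)))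
           (map K (seq 0 (j + 3))) (map K (seq 1 (S j)) ++ [R (S j)])).
  - constructor; [|constructor; [|apply HK]].
    + intros [[=]|Hin]; [lia|apply in_map_iff in Hin as (? & [=] & _)].
    + intros Hin; apply in_map_iff in Hin as (? & [=] & _).
  - apply HK.
  - simpl; rewrite !length_map, !length_seq; lia.
  - intros v [<-|[<-|Hv]]; apply Hbag; [left; reflexivity|right; left; reflexivity|].
    apply in_map_iff in Hv as (k & <- & Hk); apply in_seq in Hk.
    right; right; apply in_map, in_seq; lia.
  - intros v Hv; apply Hbag; right; right; exact Hv.
  - rewrite length_app; simpl; rewrite !length_map, !length_seq; lia.
  - intros p a b Hp Hpe Ha Hb.
    apply in_map_iff in Hb as (k & <- & _).
    destruct Ha as [<-|[<-|Ha]].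
    + exact (low_ray_separated j p i k Hp Hpe (Nat.lt_le_incl _ _ Hij)).
    + exact (low_ray_separated j p j k Hp Hpe (le_n j)).
    + exists a; split; [apply in_or_app; left; exact Ha|exact (proj1 (ends_In _ _ _ Hpe))].
Qed.

Section DecompositionsOfG.

Context {T : Type} (tE : T -> T -> Prop) (B : T -> vertex -> Prop).
Hypotheses (HTD : tree_decomposition gadj tE B) (Hfin : finite_parts B).

Let Htree : is_tree tE := proj1 HTD.
Let tE_sym : forall x y, tE x y -> tE y x := proj1 (proj1 Htree).
Let bag_cover : forall v, exists t, B t v := proj1 (proj2 HTD).
Let edge_cover : forall u w, gadj u w -> exists t, B t u /\ B t w := proj1 (proj2 (proj2 HTD)).

Lemma fresh_clique_vertex_in_bag t m : exists k, m <= k /\ ~ B t (K k).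
Proof.
  destruct (Hfin t) as [L HL]; destruct (fresh_clique_vertex L m) as (k & Hk & HkL).
  exists k; split; [exact Hk|intros Hin; exact (HkL (HL _ Hin))].
Qed.

Definition towards_clique (t t' : T) : Prop :=
  tE t t' /\ forall k, ~ B t (K k) -> confined tE B t t' (K k).

Lemma towards_clique_exists t : exists t', towards_clique t t'.
Proof.
  destruct (fresh_clique_vertex_in_bag t 0) as (k0 & _ & Hk0).
  destruct (bag_cover (K k0)) as [s Hs].
  destruct (proj1 (proj2 Htree) t s) as (p & Hp & Hpe).
  destruct p as [|x [|t' q]]; [destruct Hpe as [[=] _]| |].
  - destruct Hpe as [[= Hx] [= Hxs]]; subst x s; contradiction.
  - pose proof (ends_hd _ _ _ _ Hpe); subst x.
    assert (Htt' : tE t t') by exact (proj1 (proj2 (proj2 Hp))).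
    assert (Hk0c : confined tE B t t' (K k0))
      by exact (confined_of_bag _ _ _ HTD t t' s _ Htt' Hs (side_of_path _ t [] t' q s Hp Hpe) Hk0).
    exists t'; split; [exact Htt'|intros k Hk].
    destruct (Nat.eq_dec k k0) as [->|Hne]; [exact Hk0c|].
    destruct (edge_cover (K k) (K k0) Hne) as (s' & Hs'k & Hs'k0).
    exact (confined_of_bag _ _ _ HTD t t' s' (K k) Htt' Hs'k (Hk0c s' Hs'k0) Hk).
Qed.

Lemma towards_clique_keeps_clique t t' k : towards_clique t t' -> B t (K k) -> B t' (K k).
Proof.
  intros [Htt' Hbeyond] Hk.
  destruct (fresh_clique_vertex_in_bag t (S k)) as (k' & Hkk' & Hk').
  destruct (edge_cover (K k) (K k')) as (s & Hsk & Hsk'); [simpl; lia|].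
  exact (proj2 (bag_crossing _ _ _ HTD t t' t s (K k) Htt' Hk
                  (side_self tE Htree t' t (tE_sym _ _ Htt')) Hsk (Hbeyond k' Hk' s Hsk'))).
Qed.

Lemma clique_not_confined_behind t t' k : towards_clique t t' -> ~ confined tE B t' t (K k).
Proof.
  intros [Htt' Hbeyond] Hk.
  destruct (fresh_clique_vertex_in_bag t (S k)) as (k' & Hkk' & Hk').
  exact (confined_adj _ _ _ HTD t t' (K k') (K k) Htt' ltac:(simpl; lia) (Hbeyond k' Hk') Hk).
Qed.

Lemma not_lean_of_leaving_vertex t t' y :
  towards_clique t t' -> B t (K 0) -> B t y -> ~ B t' y -> not_lean_at gadj B t.
Proof.
  intros Htc Hk0 Hy Hy'; pose proof (proj1 Htc) as Htt'.
  destruct (Hfin t) as [L HL].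
  destruct (finite_subset_enum L (fun x => B t x /\ B t' x /\ x <> K 0)) as (X & HXn & HX).
  apply (not_lean_of_separator gadj B t (y :: X) (K 0 :: X) X).
  - constructor; [intros Hin; apply HX in Hin; tauto|exact HXn].
  - constructor; [intros Hin; apply HX in Hin; tauto|exact HXn].
  - reflexivity.
  - intros v [<-|Hv]; [exact Hy|apply HX in Hv; tauto].
  - intros v [<-|Hv]; [exact Hk0|apply HX in Hv; tauto].
  - simpl; lia.
  - intros p a b Hp Hpe Ha Hb; destruct (ends_In _ _ _ Hpe) as [Hap Hbp].
    destruct Ha as [<-|Ha]; [|exists a; split; assumption].
    destruct Hb as [<-|Hb]; [|exists b; split; assumption].
    destruct (walk_crossing gadj (confined tE B t' t) p y (K 0)) as (u & w & Huw & Hw & Hu & Hnw).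
    + exact (walk_of_path _ _ _ _ Hp Hpe).
    + exact (confined_of_leaving _ _ _ HTD t t' y Htt' Hy Hy').
    + exact (clique_not_confined_behind t t' 0 Htc).
    + destruct (confined_separation _ _ _ HTD t t' u w Htt' Huw Hu Hnw) as [Hwt Hwt'].
      exists w; split; [apply HX; repeat split; [exact (HL _ Hwt)|exact Hwt|exact Hwt'|]|exact Hw].
      (* The neighbours of [K 0] are clique vertices, never confined to the [t]-side. *)
      intros ->; destruct u as [j|j]; simpl in Huw; [|discriminate].
      exact (clique_not_confined_behind t t' j Htc Hu).
Qed.

Section NestedBags.

Variable f : nat -> T.
Hypothesis Hf : forall n, towards_clique (f n) (f (S n)).
Hypothesis Hnest : forall n v, B (f n) v -> B (f (S n)) v.

Let Hf_edge : forall n, tE (f n) (f (S n)) := fun n => proj1 (Hf n).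

Lemma nested_bags_le n n' v : n <= n' -> B (f n) v -> B (f n') v.
Proof. induction 1; auto. Qed.

Lemma finite_eventually_in_bag (L : list vertex) :
  (forall v, In v L -> exists n, B (f n) v) -> exists N, forall v, In v L -> B (f N) v.
Proof.
  induction L as [|v L IH]; intros HL; [exists 0; intros _ []|].
  destruct (HL v (or_introl eq_refl)) as [n Hn].
  destruct IH as [N HN]; [intros w Hw; exact (HL w (or_intror Hw))|].
  exists (n + N); intros w [<-|Hw]; [apply (nested_bags_le n)|apply (nested_bags_le N)];
    auto; lia.
Qed.

Lemma clique_eventually_in_bags k : exists n, B (f n) (K k).
Proof.
  apply NNPP; intros Hnone; destruct (bag_cover (K k)) as [s Hs].
  apply (not_always_towards tE Htree f s Hf_edge); intros n.
  apply (proj2 (Hf n) k); [intros H; apply Hnone; exists n; exact H|exact Hs].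
Qed.

(* If [R m] never enters, some edge [f n f(n+1)] has all bags of [R m] behind it, while
   the ray reaches a clique vertex beyond it; the ray crosses the edge through [B (f n)]. *)
Lemma ray_unbounded_in_bags m : exists i n, m <= i /\ B (f n) (R i).
Proof.
  destruct (classic (exists n, B (f n) (R m))) as [[n Hn]|Hnone];
    [exists m, n; split; [lia|exact Hn]|].
  destruct (bag_cover (R m)) as [s Hs].
  destruct (not_all_ex_not _ _ (not_always_towards tE Htree f s Hf_edge)) as [n Hn].
  assert (Hm : confined tE B (f (S n)) (f n) (R m)).
  { apply (confined_of_bag _ _ _ HTD _ _ s _ (tE_sym _ _ (Hf_edge n)) Hs).
    - destruct (side_cover tE Htree _ _ s (Hf_edge n)) as [H|H]; [contradiction|exact H].
    - intros H; apply Hnone; exists (S n); exact H. }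
  destruct (fresh_clique_vertex_in_bag (f n) (S (S m))) as (J & HmJ & HJ).
  assert (HnJ : ~ confined tE B (f (S n)) (f n) (R (pred J))).
  { intros HJ'; apply (confined_adj _ _ _ HTD (f n) (f (S n)) (K J) (R (pred J)) (Hf_edge n));
      [simpl; lia|exact (proj2 (Hf n) J HJ)|exact HJ']. }
  destruct (nat_crossing (fun i => confined tE B (f (S n)) (f n) (R i)) m (pred J))
    as (i & Hmi & Hi & Hi'); [lia|exact Hm|exact HnJ|].
  exists (S i), n; split; [lia|].
  exact (proj1 (confined_separation _ _ _ HTD _ _ (R i) (R (S i)) (Hf_edge n)
                  (or_introl eq_refl) Hi Hi')).
Qed.

Lemma not_lean_along_nested_bags : exists n, not_lean_at gadj B (f n).
Proof.
  destruct (ray_unbounded_in_bags 0) as (i & n1 & _ & Hi).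
  destruct (ray_unbounded_in_bags (S i)) as (j & n2 & Hij & Hj).
  destruct (finite_eventually_in_bag (R i :: R j :: map K (seq 0 (j + 3)))) as [N HN].
  { intros v [<-|[<-|Hv]]; [exists n1; exact Hi|exists n2; exact Hj|].
    apply in_map_iff in Hv as (k & <- & _); exact (clique_eventually_in_bags k). }
  exists N; exact (not_lean_of_two_ray_vertices B (f N) i j Hij HN).
Qed.

End NestedBags.

Lemma decomposition_not_lean : exists t, not_lean_at gadj B t.
Proof.
  destruct (choice towards_clique towards_clique_exists) as [next Hnext].
  destruct (bag_cover (K 0)) as [t0 Ht0].
  set (f n := Nat.iter n next t0).
  assert (Hf : forall n, towards_clique (f n) (f (S n))) by (intros n; apply Hnext).
  assert (Hk0 : forall n, B (f n) (K 0))
    by (induction n as [|n IH]; [exact Ht0|exact (towards_clique_keeps_clique _ _ 0 (Hf n) IH)]).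
  destruct (classic (exists n v, B (f n) v /\ ~ B (f (S n)) v)) as [(n & v & Hv & Hv')|Hnest].
  - exists (f n); exact (not_lean_of_leaving_vertex _ _ v (Hf n) (Hk0 n) Hv Hv').
  - destruct (not_lean_along_nested_bags f Hf) as [n Hn]; [|exists (f n); exact Hn].
    intros n v Hv; apply NNPP; intros Hv'; apply Hnest; exists n, v; split; assumption.
Qed.

End DecompositionsOfG.

Theorem mainTheorem3 :
  exists (V : Type) (adj : V -> V -> Prop),
    simple_graph adj /\ countable V /\
    forall (T : Type) (tE : T -> T -> Prop) (B : T -> V -> Prop),
      tree_decomposition adj tE B -> finite_parts B ->
      exists (t : T) (l : nat) (Z1 Z2 : list V),
        NoDup Z1 /\ NoDup Z2 /\ length Z1 = l /\ length Z2 = l /\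
        (forall v, In v Z1 -> B t v) /\ (forall v, In v Z2 -> B t v) /\
        ~ has_disjoint_AB_paths adj Z1 Z2 l.
Proof.
  exists vertex, gadj; split; [exact gadj_simple|split; [exact vertex_countable|]].
  intros T tE B HTD Hfin.
  exact (decomposition_not_lean tE B HTD Hfin).
Qed.
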